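(* Let $\mathbf v=(v_1,\dots,v_m)$ and $\mathbf k=(k_1,\dots,k_m)$ be $m$-tuples of positive integers with $\mathbf v\ge\mathbf k$, and $\mathbf w=(w_1,\dots,w_n)$ and $\boldsymbol\ell=(\ell_1,\dots,\ell_n)$ be $n$-tuples of positive integers with $\mathbf w\ge\boldsymbol\ell$. Let $t$ be a positive integer with $t\le\sum_i k_i$ and $t\le\sum_i\ell_i$. Then \[ C(\mathrm{cat}(\mathbf v,\mathbf w),\mathrm{cat}(\mathbf k,\boldsymbol\ell),t)\ \le\ \max\{C(\mathbf v,\mathbf k,t),C(\mathbf w,\boldsymbol\ell,t)\}+C(\mathbf v,\mathbf k,t-1)\,C(\mathbf w,\boldsymbol\ell,t-1), \] with the convention $C(\cdot,\cdot,0)=0$.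
   Context: $\mathrm{cat}(\mathbf a,\mathbf b)$ denotes concatenation of tuples. For tuples $\mathbf a,\mathbf b$ of positive integers of the same length $p$ with $\mathbf b\le\mathbf a$ entrywise and a positive integer $s\le\sum_i b_i$: let $Y_1,\dots,Y_p$ be pairwise disjoint sets with $|Y_i|=a_i$; a block is a $p$-tuple $(B_1,\dots,B_p)$ with $B_i\subseteq Y_i$, $|B_i|=b_i$; a $p$-tuple of sets $(T_1,\dots,T_p)$ is $(\mathbf a,\mathbf b,s)$-admissible if $T_i\subseteq Y_i$, $|T_i|\le b_i$ for all $i$ and $\sum|T_i|=s$, and is contained in a block if $T_i\subseteq B_i$ for all $i$. A ${\rm GC}(\mathbf a,\mathbf b,s)$ is a finite family (repetitions allowed) of blocks containing every admissible tuple in at least one block; $C(\mathbf a,\mathbf b,s)$ is the minimum number of blocks of such a design. *)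

From mathcomp Require Import all_boot.
From mathcomp Require Import finmap.
From mathcomp Require Import boolp.

Set Implicit Arguments.
Unset Strict Implicit.
Unset Printing Implicit Defensive.

Local Open Scope fset_scope.

(* Tuples of positive integers are sequences of nat; the i-th entry is
   nth 0 a i (0-based, i < size a).  The pairwise disjoint ground sets
   Y_1,...,Y_p are modelled as p separate copies indexed by i, with
   Y_i = {0, ..., a_i - 1}.  A p-tuple of sets (T_1,...,T_p) is a function
   T : nat -> {fset nat}, of which only the entries i < p matter. *)

Definition is_block (a b : seq nat) (B : nat -> {fset nat}) : Prop :=
  forall i, i < size a ->
    (forall x, x \in B i -> x < nth 0 a i) /\ #|` B i| = nth 0 b i.

Definition admissible (a b : seq nat) (s : nat) (T : nat -> {fset nat}) : Prop :=
  (forall i, i < size a ->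
     (forall x, x \in T i -> x < nth 0 a i) /\ #|` T i| <= nth 0 b i)
  /\ \sum_(i < size a) #|` T i| = s.

Definition contained_in (p : nat) (T B : nat -> {fset nat}) : Prop :=
  forall i, i < p -> T i `<=` B i.

(* A GC(a,b,s): a finite family (list, repetitions allowed) of blocks
   containing every admissible tuple in at least one block. *)
Definition is_GC (a b : seq nat) (s : nat) (F : seq (nat -> {fset nat})) : Prop :=
  (forall j, j < size F -> is_block a b (nth (fun _ => fset0) F j)) /\
  (forall T, admissible a b s T ->
     exists2 j, j < size F & contained_in (size a) T (nth (fun _ => fset0) F j)).

Definition GC_size (a b : seq nat) (s : nat) : pred nat :=
  fun n => `[< exists F, size F = n /\ is_GC a b s F >].

(* C(a,b,s) = minimum number of blocks of a GC(a,b,s); convention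
   C(.,.,0) = 0.  (If no GC exists the value is 0; this never happens under
   the standing hypotheses b <= a.) *)
Definition C (a b : seq nat) (s : nat) : nat :=
  if s == 0 then 0 else
  match pselect (exists n, GC_size a b s n) with
  | left h => ex_minn h
  | right _ => 0
  end.

From mathcomp Require Import all_boot finmap boolp zify.

Set Implicit Arguments.
Unset Strict Implicit.
Unset Printing Implicit Defensive.

(* Write A, B for GC(v,k,t), GC(w,l,t) of minimum size and A', B' for
   GC(v,k,t-1), GC(w,l,t-1) of minimum size.  Gluing the q-th block of A with
   the q-th block of B (reusing a block once one list is exhausted) gives
   max(|A|,|B|) blocks, and gluing every block of A' with every block of B'
   gives |A'||B'| more.  An admissible tuple of weight t for the concatenation
   either lies entirely on one side, and is then covered by a glued pair from
   A and B, or has weights t1, t2 in [1, t-1] on the two sides; as a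
   GC(.,.,t-1) also covers all tuples of smaller positive weight (pad them
   up to weight t-1), it is then covered by a glued pair from A' and B'. *)

Local Open Scope fset_scope.

Lemma exists_notin_bounded (S : {fset nat}) a :
  (forall x, x \in S -> x < a) -> #|` S| < a -> exists2 y, y < a & y \notin S.
Proof.
move=> S_lt card_lt; case: (pselect (exists2 y, y < a & y \notin S)) => // noy.
have sub : [fset x in iota 0 a] `<=` S.
  apply/fsubsetP => x; rewrite in_fset mem_iota /= => x_lt.
  by apply/negPn/negP => xS; apply: noy; exists x.
move: (fsubset_leq_card sub).
by rewrite card_fseq undup_id ?iota_uniq // size_iota leqNgt card_lt.
Qed.

Lemma fset_extend_bounded (S : {fset nat}) a b :
  (forall x, x \in S -> x < a) -> #|` S| <= b <= a ->
  exists S', [/\ S `<=` S', (forall x, x \in S' -> x < a) & #|` S'| = b].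
Proof.
move=> + /andP[+ b_le]; move gap: (b - #|` S|) => d.
elim: d S gap => [|d IH] S gap S_lt S_le.
  by exists S; split=> //; lia.
have [y y_lt yS] : exists2 y, y < a & y \notin S by apply: exists_notin_bounded S_lt _; lia.
have yS_lt : forall x, x \in y |` S -> x < a by move=> x /fset1UP[->|/S_lt].
have card_yS : #|` y |` S| = #|` S|.+1 by rewrite cardfsU1 yS.
have [||S' [sub S'_lt card_S']] := IH (y |` S) _ yS_lt; try lia.
by exists S'; split=> //; apply: fsubset_trans (fsubsetU1 y S) sub.
Qed.

Notation tuple0 := (fun _ : nat => (fset0 : {fset nat})).

Definition bounded (a b : seq nat) (T : nat -> {fset nat}) : Prop :=
  forall i, i < size a ->
    (forall x, x \in T i -> x < nth 0 a i) /\ #|` T i| <= nth 0 b i.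

Definition weight (p : nat) (T : nat -> {fset nat}) : nat := \sum_(i < p) #|` T i|.

Definition entrywise_le (b a : seq nat) : Prop :=
  forall i, i < size a -> nth 0 b i <= nth 0 a i.

Definition capacity (a b : seq nat) : nat := \sum_(i < size a) nth 0 b i.

Lemma admissibleE a b s T : admissible a b s T <-> bounded a b T /\ weight (size a) T = s.
Proof. by []. Qed.

Lemma capacityE a b : size b = size a -> capacity a b = sumn b.
Proof. by rewrite /capacity sumnE (big_nth 0) big_mkord => ->. Qed.

Lemma bounded_tuple0 a b : bounded a b tuple0.
Proof. by move=> i _; rewrite cardfs0. Qed.

Lemma weight_tuple0 p : weight p tuple0 = 0.
Proof. by rewrite /weight big1 // => i _; rewrite cardfs0. Qed.

Section Extension.

Variables a b : seq nat.
Hypothesis b_le_a : entrywise_le b a.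

Lemma bounded_extend_block T :
  bounded a b T -> exists2 B, is_block a b B & contained_in (size a) T B.
Proof.
move=> T_bnd.
have ext i : exists S, i < size a ->
    [/\ T i `<=` S, (forall x, x \in S -> x < nth 0 a i) & #|` S| = nth 0 b i].
  have [i_lt|] := ltnP i (size a); last by exists fset0.
  have [T_lt T_card] := T_bnd i i_lt.
  have [S ?] := fset_extend_bounded T_lt (introT andP (conj T_card (b_le_a i_lt))).
  by exists S.
have [B HB] := choice ext.
by exists B => i /HB[]; [split | ].
Qed.

Lemma bounded_extend_succ T :
  bounded a b T -> weight (size a) T < capacity a b ->
  exists T', [/\ bounded a b T', forall i, T i `<=` T' i &
                 weight (size a) T' = (weight (size a) T).+1].
Proof.
move=> T_bnd w_lt.
have [i0 i0_lt] : exists i0 : 'I_(size a), #|` T i0| < nth 0 b i0.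
  apply/not_existsP => full; move: w_lt; rewrite ltnNge => /negP; apply.
  by apply: leq_sum => i _; rewrite leqNgt; apply/negP/full.
have [T_lt _] := T_bnd i0 (ltn_ord i0).
have [y y_lt yT] := exists_notin_bounded T_lt (leq_trans i0_lt (b_le_a (ltn_ord i0))).
exists (fun j => if j == val i0 then y |` T i0 else T j); split.
- move=> i i_lt; case: eqP => [->|_]; last exact: T_bnd.
  by split; [move=> x /fset1UP[->|/T_lt] | rewrite cardfsU1 yT].
- by move=> i; case: eqP => [->|_]; [apply: fsubsetU1 | apply: fsubset_refl].
- rewrite /weight (bigD1 i0) //= eqxx cardfsU1 yT add1n [in RHS](bigD1 i0) //=.
  congr (_ + _).+1; apply: eq_bigr => i /negbTE ne_i.
  by rewrite -(inj_eq val_inj) in ne_i; rewrite ne_i.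
Qed.

Lemma bounded_extend_weight T s :
  bounded a b T -> weight (size a) T <= s <= capacity a b ->
  exists T', [/\ bounded a b T', forall i, T i `<=` T' i & weight (size a) T' = s].
Proof.
move=> + /andP[+ s_le]; move gap: (s - weight (size a) T) => d.
elim: d T gap => [|d IH] T gap T_bnd w_le.
  by exists T; split=> //; lia.
have [|T1 [T1_bnd sub1 w1]] := bounded_extend_succ T_bnd; first lia.
have [||T2 [T2_bnd sub2 w2]] := IH T1 _ T1_bnd; try lia.
by exists T2; split=> // i; apply: fsubset_trans (sub1 i) (sub2 i).
Qed.

Lemma admissible_exists s : s <= capacity a b -> exists T, admissible a b s T.
Proof.
move=> s_le; have w0 : weight (size a) tuple0 <= s <= capacity a b.
  by rewrite weight_tuple0 s_le.
by have [T [T_bnd _ w_T]] := bounded_extend_weight (@bounded_tuple0 a b) w0; exists T.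
Qed.

End Extension.

(* Tuples with entries in {0, ..., M-1} are encoded by finite functions, so
   that the blocks of (a, b) can be enumerated. *)
Definition tuple_of_ffun p M (f : {ffun 'I_p -> {set 'I_M}}) : nat -> {fset nat} :=
  fun i => if insub i is Some j then [fset val x | x in enum (f j)] else fset0.

Definition ffun_of_tuple p M (T : nat -> {fset nat}) : {ffun 'I_p -> {set 'I_M}} :=
  [ffun j : 'I_p => [set x : 'I_M | val x \in T j]].

Lemma ffun_of_tupleK p M T i : i < p -> (forall x, x \in T i -> x < M) ->
  tuple_of_ffun (ffun_of_tuple p M T) i = T i.
Proof.
move=> i_lt T_lt; rewrite /tuple_of_ffun insubT ffunE /=.
apply/fsetP => y; apply/imfsetP/idP => [[x]|yT]; first by rewrite mem_enum inE => ? ->.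
by exists (Ordinal (T_lt y yT)); rewrite ?mem_enum ?inE.
Qed.

Lemma nth_le_sumn (a : seq nat) i : nth 0 a i <= sumn a.
Proof.
elim: a i => [|x a IH] [|i] //=; first exact: leq_addr.
exact: leq_trans (IH i) (leq_addl _ _).
Qed.

Lemma GC_exists a b s : entrywise_le b a -> exists F, is_GC a b s F.
Proof.
move=> b_le_a; pose p := size a; pose M := sumn a.
pose L := [seq f <- enum {ffun 'I_p -> {set 'I_M}} | `[< is_block a b (tuple_of_ffun f) >]].
exists [seq tuple_of_ffun f | f <- L]; split.
  move=> j; rewrite size_map => j_lt; rewrite (nth_map [ffun => set0]) //.
  by have := mem_nth [ffun => set0] j_lt; rewrite mem_filter => /andP[/asboolP].
move=> T [T_bnd _]; have [B B_block TB] := bounded_extend_block b_le_a T_bnd.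
have BK i : i < p -> tuple_of_ffun (ffun_of_tuple p M B) i = B i.
  move=> i_lt; apply: ffun_of_tupleK => // x xB; have [B_lt _] := B_block i i_lt.
  exact: leq_trans (B_lt x xB) (nth_le_sumn a i).
have B_in : ffun_of_tuple p M B \in L.
  by rewrite mem_filter mem_enum andbT; apply/asboolP => i i_lt; rewrite BK //; apply: B_block.
exists (index (ffun_of_tuple p M B) L); first by rewrite size_map index_mem.
rewrite (nth_map [ffun => set0]) ?index_mem // nth_index // => i i_lt.
by rewrite BK //; apply: TB.
Qed.

Lemma C_le_size a b s F : 0 < s -> is_GC a b s F -> C a b s <= size F.
Proof.
rewrite /C; case: eqP => [->|_ _ F_GC] //.
case: pselect => [GC_ex|]; last by case; exists (size F); apply/asboolP; exists F.
by case: ex_minnP => m _; apply; apply/asboolP; exists F.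
Qed.

Lemma C_attained a b s : 0 < s -> entrywise_le b a ->
  exists F, size F = C a b s /\ is_GC a b s F.
Proof.
rewrite /C; case: eqP => [->|_ _ b_le_a] //.
have [F F_GC] := GC_exists s b_le_a.
case: pselect => [GC_ex|]; last by case; exists (size F); apply/asboolP; exists F.
by case: ex_minnP => m /asboolP.
Qed.

Definition all_blocks a b (F : seq (nat -> {fset nat})) : Prop :=
  forall j, j < size F -> is_block a b (nth tuple0 F j).

Definition covers p (F : seq (nat -> {fset nat})) T : Prop :=
  exists2 j, j < size F & contained_in p T (nth tuple0 F j).

Section Coverings.

Variables a b : seq nat.
Hypothesis b_le_a : entrywise_le b a.

Lemma GC_nonempty s F : s <= capacity a b -> is_GC a b s F -> 0 < size F.
Proof.
move=> s_le [_ F_cov]; have [T T_adm] := admissible_exists b_le_a s_le.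
by have [j j_lt _] := F_cov T T_adm; apply: leq_ltn_trans j_lt.
Qed.

(* A tuple of smaller weight is padded up to weight s first. *)
Lemma GC_covers_lighter s F T : s <= capacity a b -> is_GC a b s F ->
  bounded a b T -> weight (size a) T <= s -> covers (size a) F T.
Proof.
move=> s_le [_ F_cov] T_bnd w_le.
have [|T' [T'_bnd sub w_T']] := bounded_extend_weight b_le_a T_bnd (s := s).
  by rewrite w_le s_le.
have [j j_lt T'_in] := F_cov T' (conj T'_bnd w_T').
by exists j => // i i_lt; apply: fsubset_trans (sub i) (T'_in i i_lt).
Qed.

Lemma lower_design t : t.-1 <= capacity a b ->
  exists F, [/\ size F = C a b t.-1, all_blocks a b F &
    forall T, bounded a b T -> 0 < weight (size a) T < t -> covers (size a) F T].
Proof.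
move=> t_le; have [t1_eq0|t1_gt0] := posnP t.-1.
  by exists [::]; split=> [||T _ w]; rewrite /C ?t1_eq0 //; lia.
have [F [size_F F_GC]] := C_attained t1_gt0 b_le_a.
exists F; split=> // [|T T_bnd w]; first by case: F_GC.
by apply: GC_covers_lighter F_GC T_bnd _; lia.
Qed.

End Coverings.

Section ListsOfBlocks.

Variables a b : seq nat.

Lemma all_blocks_cat F G : all_blocks a b F -> all_blocks a b G -> all_blocks a b (F ++ G).
Proof.
move=> F_bl G_bl j; rewrite size_cat nth_cat => j_lt.
by case: ltnP => [/F_bl|j_ge]; last (apply: G_bl; lia).
Qed.

Lemma all_blocks_mkseq f n :
  (forall q, q < n -> is_block a b (f q)) -> all_blocks a b (mkseq f n).
Proof. by move=> f_bl q; rewrite size_mkseq => q_lt; rewrite nth_mkseq //; apply: f_bl. Qed.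

Lemma all_blocks_nth_head F j :
  all_blocks a b F -> 0 < size F -> is_block a b (nth (nth tuple0 F 0) F j).
Proof.
move=> F_bl F_gt0; have [j_lt|j_ge] := ltnP j (size F).
  by rewrite (set_nth_default tuple0) //; apply: F_bl.
by rewrite nth_default //; apply: F_bl.
Qed.

End ListsOfBlocks.

Local Close Scope fset_scope.

Lemma covers_catl p F G T : covers p F T -> covers p (F ++ G) T.
Proof.
case=> j j_lt T_in; exists j; first by rewrite size_cat ltn_addr.
by rewrite nth_cat j_lt.
Qed.

Lemma covers_catr p F G T : covers p G T -> covers p (F ++ G) T.
Proof.
case=> j j_lt T_in; exists (size F + j); first by rewrite size_cat ltn_add2l.
by rewrite nth_cat ltnNge leq_addr /= addKn.
Qed.

Lemma covers_mkseq p f n T q : q < n -> contained_in p T (f q) -> covers p (mkseq f n) T.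
Proof. by move=> q_lt T_in; exists q; rewrite ?size_mkseq ?nth_mkseq. Qed.

Definition glue m (X Y : nat -> {fset nat}) : nat -> {fset nat} :=
  fun i => if i < m then X i else Y (i - m).

Lemma glue_block v k w l X Y : size k = size v ->
  is_block v k X -> is_block w l Y -> is_block (v ++ w) (k ++ l) (glue (size v) X Y).
Proof.
move=> size_k X_bl Y_bl i; rewrite size_cat /glue !nth_cat size_k => i_lt.
by case: ltnP => [/X_bl|i_ge]; last (apply: Y_bl; lia).
Qed.

Lemma glue_contained m n T X Y :
  contained_in m T X -> contained_in n (fun i => T (m + i)) Y ->
  contained_in (m + n) T (glue m X Y).
Proof.
move=> TX TY i i_lt; rewrite /glue; case: ltnP => [/TX|i_ge]; first exact.
by have := TY (i - m); rewrite subnKC //; apply; lia.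
Qed.

Lemma contained_in_empty n T Y : (forall i, i < n -> T i = fset0) -> contained_in n T Y.
Proof. by move=> T0 i i_lt; rewrite T0 // fsub0set. Qed.

Lemma weight_cat m n T : weight (m + n) T = weight m T + weight n (fun i => T (m + i)).
Proof. by rewrite /weight big_split_ord. Qed.

Lemma weight_eq0 n T : weight n T = 0 -> forall i, i < n -> T i = fset0.
Proof.
move=> w0 i i_lt; apply: cardfs0_eq; move: w0; rewrite /weight (bigD1 (Ordinal i_lt)) //=.
by move/eqP; rewrite addn_eq0 => /andP[/eqP].
Qed.

Section Concatenation.

Variables v k w l : seq nat.
Hypothesis size_k : size k = size v.

Lemma bounded_catl T : bounded (v ++ w) (k ++ l) T -> bounded v k T.
Proof.
move=> T_bnd i i_lt; have := T_bnd i; rewrite size_cat !nth_cat size_k i_lt.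
by apply; rewrite ltn_addr.
Qed.

Lemma bounded_catr T : bounded (v ++ w) (k ++ l) T -> bounded w l (fun i => T (size v + i)).
Proof.
move=> T_bnd i i_lt; have := T_bnd (size v + i).
rewrite size_cat !nth_cat size_k (ltnNge (size v + i) (size v)) leq_addr /= addKn.
by apply; rewrite ltn_add2l.
Qed.

End Concatenation.

(* Past the end of the shorter list, its first block is reused. *)
Definition zip_design m (A B : seq (nat -> {fset nat})) : seq (nat -> {fset nat}) :=
  mkseq (fun q => glue m (nth (nth tuple0 A 0) A q) (nth (nth tuple0 B 0) B q))
        (maxn (size A) (size B)).

(* The pair (i, j) of indices is encoded as i * |B| + j. *)
Definition product_design m (A B : seq (nat -> {fset nat})) : seq (nat -> {fset nat}) :=
  mkseq (fun q => glue m (nth tuple0 A (q %/ size B)) (nth tuple0 B (q %% size B)))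
        (size A * size B).

Section DesignBlocks.

Variables v k w l : seq nat.
Hypothesis size_k : size k = size v.

Lemma zip_design_blocks A B : all_blocks v k A -> all_blocks w l B ->
  0 < size A -> 0 < size B -> all_blocks (v ++ w) (k ++ l) (zip_design (size v) A B).
Proof.
move=> A_bl B_bl A_gt0 B_gt0; apply: all_blocks_mkseq => q _.
by apply: glue_block => //; apply: all_blocks_nth_head.
Qed.

Lemma product_design_blocks A B : all_blocks v k A -> all_blocks w l B ->
  all_blocks (v ++ w) (k ++ l) (product_design (size v) A B).
Proof.
move=> A_bl B_bl; apply: all_blocks_mkseq => q q_lt.
have B_gt0 : 0 < size B by move: q_lt; case: (size B); rewrite ?muln0.
by apply: glue_block => //; [apply: A_bl; rewrite ltn_divLR | apply: B_bl; rewrite ltn_pmod].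
Qed.

End DesignBlocks.

Lemma zip_design_covers_left m n A B T : covers m A T ->
  (forall i, i < n -> T (m + i) = fset0) -> covers (m + n) (zip_design m A B) T.
Proof.
case=> j j_lt T_in T_right0; apply: (covers_mkseq (q := j)).
  by rewrite leq_max j_lt.
apply: glue_contained; first by rewrite (set_nth_default tuple0).
exact: contained_in_empty.
Qed.

Lemma zip_design_covers_right m n A B T : covers n B (fun i => T (m + i)) ->
  (forall i, i < m -> T i = fset0) -> covers (m + n) (zip_design m A B) T.
Proof.
case=> j j_lt T_in T_left0; apply: (covers_mkseq (q := j)).
  by rewrite leq_max j_lt orbT.
apply: glue_contained; last by rewrite (set_nth_default tuple0).
exact: contained_in_empty.
Qed.

Lemma product_design_covers m n A B T : covers m A T -> covers n B (fun i => T (m + i)) ->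
  covers (m + n) (product_design m A B) T.
Proof.
case=> i i_lt T_in [j j_lt T'_in]; apply: (covers_mkseq (q := i * size B + j)).
  have : i.+1 * size B <= size A * size B by rewrite leq_mul2r i_lt orbT.
  by rewrite mulSn; lia.
have B_gt0 : 0 < size B by apply: leq_ltn_trans j_lt.
rewrite divnMDl // divn_small // addn0 modnMDl modn_small //.
exact: glue_contained.
Qed.

Lemma cat_design_GC v k w l t A B A' B' : size k = size v ->
  is_GC v k t A -> is_GC w l t B -> 0 < size A -> 0 < size B ->
  all_blocks v k A' -> all_blocks w l B' ->
  (forall T, bounded v k T -> 0 < weight (size v) T < t -> covers (size v) A' T) ->
  (forall T, bounded w l T -> 0 < weight (size w) T < t -> covers (size w) B' T) ->
  is_GC (v ++ w) (k ++ l) t (zip_design (size v) A B ++ product_design (size v) A' B').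
Proof.
move=> size_k [A_bl A_cov] [B_bl B_cov] A_gt0 B_gt0 A'_bl B'_bl A'_cov B'_cov.
split.
  by apply: all_blocks_cat; [apply: zip_design_blocks | apply: product_design_blocks].
move=> T /admissibleE[T_bnd]; rewrite size_cat weight_cat => w_T.
have Tl_bnd := bounded_catl size_k T_bnd; have Tr_bnd := bounded_catr size_k T_bnd.
have [wl0|wl_gt0] := posnP (weight (size v) T).
  apply: covers_catl; apply: zip_design_covers_right; last exact: weight_eq0.
  by apply: B_cov; apply/admissibleE; split=> //; lia.
have [wr0|wr_gt0] := posnP (weight (size w) (fun i => T (size v + i))).
  apply: covers_catl; apply: zip_design_covers_left; last exact: weight_eq0.
  by apply: A_cov; apply/admissibleE; split=> //; lia.
by apply: covers_catr; apply: product_design_covers; [apply: A'_cov | apply: B'_cov] => //; lia.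
Qed.

Theorem theorem6p3 (v k w l : seq nat) (t : nat) :
  size k = size v ->
  all (fun x => 0 < x) v -> all (fun x => 0 < x) k ->
  (forall i, i < size v -> nth 0 k i <= nth 0 v i) ->
  size l = size w ->
  all (fun x => 0 < x) w -> all (fun x => 0 < x) l ->
  (forall i, i < size w -> nth 0 l i <= nth 0 w i) ->
  0 < t -> t <= sumn k -> t <= sumn l ->
  C (v ++ w) (k ++ l) t <=
    maxn (C v k t) (C w l t) + C v k t.-1 * C w l t.-1.
Proof.
move=> size_k _ _ k_le_v size_l _ _ l_le_w t_gt0 t_le_k t_le_l.
rewrite -(capacityE size_k) in t_le_k; rewrite -(capacityE size_l) in t_le_l.
have [A [<- A_GC]] := C_attained t_gt0 k_le_v.
have [B [<- B_GC]] := C_attained t_gt0 l_le_w.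
have [A' [<- A'_bl A'_cov]] := lower_design k_le_v (leq_trans (leq_pred t) t_le_k).
have [B' [<- B'_bl B'_cov]] := lower_design l_le_w (leq_trans (leq_pred t) t_le_l).
have := C_le_size t_gt0 (cat_design_GC size_k A_GC B_GC
  (GC_nonempty k_le_v t_le_k A_GC) (GC_nonempty l_le_w t_le_l B_GC)
  A'_bl B'_bl A'_cov B'_cov).
by rewrite size_cat !size_mkseq.
Qed.
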